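(* Let $s\ge1$, $P\ge 2s+1$, $d\ge1$, and let $\mathbf{W}$ and the randomized map $\phi$ be as in the context. Let $\mathbf{G}\in\mathbb{R}^{d\times P}$ be arbitrary and let $\mathbf{N}=[\mathbf{n}_1,\dots,\mathbf{n}_P]\in\mathbb{R}^{d\times P}$ be fixed (chosen independently of the randomness of $\phi$) with $|\{j:\mathbf{n}_j\neq\mathbf{0}\}|\le s$. Then with probability 1, $\phi(\mathbf{G}\mathbf{W}+\mathbf{N})=\{j:\mathbf{n}_j\neq \mathbf{0}\}$.
   Context: Let $\mathbf{C}\in\mathbb{C}^{P\times P}$ be the IDFT matrix $\mathbf{C}_{jk}=\frac{1}{\sqrt P}\exp\!\big(\frac{2\pi i}{P}(j-1)(k-1)\big)$, $j,k=1,\dots,P$; let $\mathbf{C}_L$ be its first $P-2s$ rows and $\mathbf{C}_R$ its last $2s$ rows; $\dagger$ denotes conjugate transpose. Let $\mathbf{A}^{Cyc}\in\{0,1\}^{P\times P}$ be given by $\mathbf{A}^{Cyc}_{k,\ell}=1$ iff $(\ell-k)\bmod P\in\{0,1,\dots,2s\}$. For each $k$, let $\alpha_k=\{\ell:\mathbf{A}^{Cyc}_{k,\ell}=0\}$, and let $\mathbf{q}_k\in\mathbb{C}^{1\times(P-2s-1)}$ be the unique row vector with $[\mathbf{q}_k,\,1]\,(\mathbf{C}_L)_{\cdot,\alpha_k}=\mathbf{0}$. Let $\mathbf{Q}\in\mathbb{C}^{P\times(P-2s-1)}$ have $k$-th row $\mathbf{q}_k$, and $\mathbf{W}=[\mathbf{Q},\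 \mathbf{1}_P]\,\mathbf{C}_L$. The map $\phi$: given $\mathbf{R}\in\mathbb{C}^{d\times P}$, draw $\mathbf{f}\in\mathbb{R}^{1\times d}$ with distribution $\mathcal{N}(\mathbf{1}_{1\times d},\mathbf{I}_d)$; compute $(h_{P-2s},h_{P-2s+1},\dots,h_{P-1})=\mathbf{f}\mathbf{R}\mathbf{C}_R^{\dagger}$; let $\beta=(\beta_0,\dots,\beta_{s-1})$ be any solution of $\sum_{k=0}^{s-1}\beta_k h_{P-s-i+k}=h_{P-i}$ for $i=1,\dots,s$; then for $\ell=0,1,\dots,P-2s-1$ in increasing order set $h_\ell=\sum_{u=0}^{s-1}\beta_u h_{\ell+u-s}$, where indices are taken modulo $P$ (so $h_{-m}=h_{P-m}$); let $\mathbf{h}=(h_0,\dots,h_{P-1})^T$ and $\mathbf{t}=(t_0,\dots,t_{P-1})^T=\mathbf{C}\mathbf{h}$; return $\phi(\mathbf{R})=\{j\in\{1,\dots,P\}:t_{j-1}\neq 0\}$. *)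

From Stdlib Require Import Reals List.
Open Scope R_scope.

Definition Cpx : Type := (R * R)%type.
Definition C0 : Cpx := (0, 0).
Definition C1 : Cpx := (1, 0).
Definition RtoC (x : R) : Cpx := (x, 0).
Definition Cadd (z w : Cpx) : Cpx := (fst z + fst w, snd z + snd w).
Definition Cmul (z w : Cpx) : Cpx :=
  (fst z * fst w - snd z * snd w, fst z * snd w + snd z * fst w).
Definition Cconj (z : Cpx) : Cpx := (fst z, - snd z).

Fixpoint Rsum (n : nat) (F : nat -> R) : R :=
  match n with O => 0 | S m => Rsum m F + F m end.
Fixpoint Rprod (n : nat) (F : nat -> R) : R :=
  match n with O => 1 | S m => Rprod m F * F m end.
Fixpoint Csum (n : nat) (F : nat -> Cpx) : Cpx :=
  match n with O => C0 | S m => Cadd (Csum m F) (F m) end.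

(* ---------- the IDFT matrix, 0-based: Cmat P j k = exp(2 pi i j k / P)/sqrt P ---------- *)
Definition Cmat (P j k : nat) : Cpx :=
  let th := 2 * PI * INR j * INR k / INR P in
  (cos th / sqrt (INR P), sin th / sqrt (INR P)).
(* C_L = rows 0 .. P-2s-1 ; C_R = rows P-2s .. P-1 of Cmat. *)

(* alpha_k = { l < P : A^Cyc_{k,l} = 0 } = { l : (l - k) mod P > 2s }.
   Row k of Q (entries Q k m, m < P-2s-1) satisfies [q_k, 1] (C_L)_{., alpha_k} = 0;
   the coefficient 1 multiplies the last row (index P-2s-1) of C_L. *)
Definition is_Q (s P : nat) (Q : nat -> nat -> Cpx) : Prop :=
  forall k l, (k < P)%nat -> (l < P)%nat -> (2 * s < (l + P - k) mod P)%nat ->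
    Cadd (Csum (P - 2 * s - 1) (fun m => Cmul (Q k m) (Cmat P m l)))
         (Cmat P (P - 2 * s - 1) l) = C0.

(* W = [Q, 1_P] C_L  (P x P) *)
Definition Wmat (s P : nat) (Q : nat -> nat -> Cpx) (k l : nat) : Cpx :=
  Cadd (Csum (P - 2 * s - 1) (fun m => Cmul (Q k m) (Cmat P m l)))
       (Cmat P (P - 2 * s - 1) l).

Definition GWN (s P : nat) (Q : nat -> nat -> Cpx) (G N : nat -> nat -> R)
  (i l : nat) : Cpx :=
  Cadd (Csum P (fun k => Cmul (RtoC (G i k)) (Wmat s P Q k l))) (RtoC (N i l)).

(* h_{P-2s+r} (r < 2s) = (f Rm C_R^dagger)_r *)
Definition h_init (s P d : nat) (Rm : nat -> nat -> Cpx) (f : nat -> R) (j : nat) : Cpx :=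
  if (P - 2 * s <=? j)%nat then
    Csum d (fun i => Cmul (RtoC (f i))
      (Csum P (fun k => Cmul (Rm i k) (Cconj (Cmat P j k)))))
  else C0.

Definition beta_solves (s P : nat) (h : nat -> Cpx) (beta : nat -> Cpx) : Prop :=
  forall i, (1 <= i <= s)%nat ->
    Csum s (fun k => Cmul (beta k) (h (P - s - i + k)%nat)) = h (P - i)%nat.

(* recursion: for l = 0,...,n-1 in increasing order,
   h_l := sum_{u<s} beta_u h_{(l+u-s) mod P} *)
Fixpoint h_rec (s P : nat) (beta : nat -> Cpx) (h0 : nat -> Cpx) (n : nat) : nat -> Cpx :=
  match n with
  | O => h0
  | S m =>
      let g := h_rec s P beta h0 m in
      fun k => if (k =? m)%nat
               then Csum s (fun u => Cmul (beta u) (g ((m + u + P - s) mod P)%nat))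
               else g k
  end.

Definition h_full (s P d : nat) (Rm : nat -> nat -> Cpx) (f : nat -> R) (beta : nat -> Cpx)
  : nat -> Cpx := h_rec s P beta (h_init s P d Rm f) (P - 2 * s).

(* t = Cpx h ; t_j for j < P (0-based; j corresponds to index j+1 of the paper) *)
Definition t_vec (s P d : nat) (Rm : nat -> nat -> Cpx) (f : nat -> R) (beta : nat -> Cpx)
  (j : nat) : Cpx :=
  Csum P (fun k => Cmul (Cmat P j k) (h_full s P d Rm f beta k)).

Definition phi_equals (s P d : nat) (Rm : nat -> nat -> Cpx) (f : nat -> R)
  (beta : nat -> Cpx) (S : nat -> Prop) : Prop :=
  forall j, (j < P)%nat -> (t_vec s P d Rm f beta j <> C0 <-> S j).

Definition phi_fails (s P d : nat) (Rm : nat -> nat -> Cpx) (S : nat -> Prop)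
  (f : nat -> R) : Prop :=
  (~ exists beta, beta_solves s P (h_init s P d Rm f) beta) \/
  (exists beta, beta_solves s P (h_init s P d Rm f) beta /\ ~ phi_equals s P d Rm f beta S).

Definition col_nonzero (d : nat) (N : nat -> nat -> R) (j : nat) : Prop :=
  exists i, (i < d)%nat /\ N i j <> 0.

Definition lebesgue_null (d : nat) (E : (nat -> R) -> Prop) : Prop :=
  forall eps, 0 < eps ->
    exists a b : nat -> nat -> R,
      (forall n i, (i < d)%nat -> a n i <= b n i) /\
      (forall M, Rsum M (fun n => Rprod d (fun i => b n i - a n i)) <= eps) /\
      (forall f, E f -> exists n, forall i, (i < d)%nat -> a n i <= f i <= b n i).

From Pilot Require Import Defs.
From Stdlib Require Import Reals List Lra Lia.
From Stdlib Require Cantor IndefiniteDescription Classical_Prop.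
(* Re-imported so that [C0] and [C1] are the complex constants, not [Stdlib.Reals.Cos_rel.C1]. *)
Import Defs.
Open Scope R_scope.

(* The rows of W = [Q, 1] C_L lie in the span of the first P - 2s rows of the unitary matrix C,
   so the measurements h_(P-2s), ..., h_(P-1) of f (G W + N) only see the real vector n = f N:
   they are entries of the conjugate DFT  h_a = sum_k n_k conj(C_(a,k)),  which is P-periodic in a.
   Since n has at most s nonzero entries, h is a sum of at most s geometric sequences, so it
   satisfies a linear recurrence of order s (Prony).  Every solution beta of the s x s system
   reproduces that recurrence on all of h, hence the recursion rebuilds h exactly and t = C h = n.
   So phi returns the support of n = f N, which is the set of nonzero columns of N unless f lies
   on one of finitely many hyperplanes f . n_j = 0 with n_j <> 0, a Lebesgue-null set. *)

(** * Finite sums *)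

Lemma Rsum_ext n F G : (forall i, (i < n)%nat -> F i = G i) -> Rsum n F = Rsum n G.
Proof. induction n; intros H; simpl; [reflexivity|]. rewrite IHn, H by auto; reflexivity. Qed.

Lemma Rsum_succ n F : Rsum (S n) F = Rsum n F + F n.
Proof. reflexivity. Qed.

Lemma Rsum_plus n F G : Rsum n (fun i => F i + G i) = Rsum n F + Rsum n G.
Proof. induction n; simpl; [lra|]. rewrite IHn; lra. Qed.

Lemma Rsum_scal_l n c F : Rsum n (fun i => c * F i) = c * Rsum n F.
Proof. induction n; simpl; [lra|]. rewrite IHn; lra. Qed.

Lemma Rsum_scal_r n c F : Rsum n (fun i => F i * c) = Rsum n F * c.
Proof. induction n; simpl; [lra|]. rewrite IHn; lra. Qed.

Lemma Rsum_opp n F : Rsum n (fun i => - F i) = - Rsum n F.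
Proof. induction n; simpl; [lra|]. rewrite IHn; lra. Qed.

Lemma Rsum_const n c : Rsum n (fun _ => c) = INR n * c.
Proof. induction n; simpl Rsum; [simpl; lra|]. rewrite IHn, S_INR; ring. Qed.

Lemma Rsum_eq0 n F : (forall i, (i < n)%nat -> F i = 0) -> Rsum n F = 0.
Proof. intros H. rewrite (Rsum_ext _ _ (fun _ => 0)), Rsum_const by auto. ring. Qed.

Lemma Rsum_le n F G : (forall i, (i < n)%nat -> F i <= G i) -> Rsum n F <= Rsum n G.
Proof.
  induction n; intros H; simpl; [lra|].
  apply Rplus_le_compat; [apply IHn|apply H]; auto.
Qed.

Lemma Rsum_ge0 n F : (forall i, (i < n)%nat -> 0 <= F i) -> 0 <= Rsum n F.
Proof. intros H. rewrite <- (Rsum_eq0 n (fun _ => 0)) by auto. apply Rsum_le, H. Qed.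

Lemma Rsum_add_range n m F : Rsum (n + m) F = Rsum n F + Rsum m (fun i => F (n + i)%nat).
Proof.
  induction m; simpl; [rewrite Nat.add_0_r; ring|].
  rewrite Nat.add_succ_r; simpl. rewrite IHm; ring.
Qed.

Lemma Rsum_le_range M K F : (forall m, 0 <= F m) -> (forall m, (K <= m)%nat -> F m = 0) ->
  Rsum M F <= Rsum K F.
Proof.
  intros Hnonneg Hzero. destruct (Nat.le_gt_cases M K) as [HMK|HMK].
  - replace K with (M + (K - M))%nat by lia. rewrite Rsum_add_range.
    pose proof (Rsum_ge0 (K - M) (fun i => F (M + i)%nat) (fun i _ => Hnonneg _)). lra.
  - replace M with (K + (M - K))%nat by lia. rewrite Rsum_add_range, (Rsum_eq0 (M - K)).
    + lra.
    + intros; apply Hzero; lia.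
Qed.

Lemma Rsum_delta n j c : (j < n)%nat -> Rsum n (fun i => if (i =? j)%nat then c else 0) = c.
Proof.
  induction n; intros H; simpl; [lia|].
  destruct (Nat.eqb_spec n j) as [->|Hnj].
  - rewrite Rsum_eq0; [ring|]. intros i Hi. destruct (Nat.eqb_spec i j); [lia|auto].
  - rewrite IHn by lia. ring.
Qed.

Lemma Rsum_split_at n i0 F : (i0 < n)%nat ->
  Rsum n F = F i0 + Rsum n (fun i => if (i =? i0)%nat then 0 else F i).
Proof.
  intros H. rewrite <- (Rsum_delta n i0 (F i0)) by auto. rewrite <- Rsum_plus.
  apply Rsum_ext. intros i _. destruct (Nat.eqb_spec i i0) as [->|]; ring.
Qed.

Lemma Rsum_term_le n F j : (forall i, (i < n)%nat -> 0 <= F i) -> (j < n)%nat -> F j <= Rsum n F.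
Proof.
  intros H Hj. rewrite (Rsum_split_at n j F Hj).
  enough (0 <= Rsum n (fun i => if (i =? j)%nat then 0 else F i)) by lra.
  apply Rsum_ge0. intros i Hi. destruct (i =? j)%nat; [lra|auto].
Qed.

Lemma Rabs_Rsum n F : Rabs (Rsum n F) <= Rsum n (fun i => Rabs (F i)).
Proof.
  induction n; simpl; [rewrite Rabs_R0; lra|].
  eapply Rle_trans; [apply Rabs_triang|]. lra.
Qed.

Lemma Rsum_blocks M K F : Rsum (M * K) F = Rsum M (fun k => Rsum K (fun j => F (k * K + j)%nat)).
Proof. induction M; simpl; [reflexivity|]. rewrite Nat.add_comm, Rsum_add_range, IHM. reflexivity. Qed.

Lemma Rsum_inj_le M K (h : nat -> nat) (F : nat -> R) :
  (forall n, (n < M)%nat -> (h n < K)%nat) ->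
  (forall n n', (n < M)%nat -> (n' < M)%nat -> h n = h n' -> n = n') ->
  (forall x, 0 <= F x) -> Rsum M (fun n => F (h n)) <= Rsum K F.
Proof.
  revert F; induction M as [|M IH]; intros F Hrange Hinj HF; simpl.
  - apply Rsum_ge0; auto.
  - rewrite (Rsum_split_at K (h M) F) by auto.
    set (F' := fun x => if (x =? h M)%nat then 0 else F x).
    enough (Rsum M (fun n => F' (h n)) <= Rsum K F').
    { rewrite (Rsum_ext M _ (fun n => F' (h n))); [unfold F' in *; lra|].
      intros n Hn. unfold F'. destruct (Nat.eqb_spec (h n) (h M)) as [E|]; [|reflexivity].
      apply Hinj in E; lia. }
    apply IH; auto. intros x. unfold F'. destruct (x =? h M)%nat; [lra|auto].
Qed.

Lemma Rsum_half_powers M eps : Rsum M (fun k => eps / 2 ^ S k) = eps - eps / 2 ^ M.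
Proof.
  induction M; [simpl; field|]. rewrite Rsum_succ, IHM. simpl. field. apply pow_nonzero. lra.
Qed.

Lemma Rprod_ext n F G : (forall i, (i < n)%nat -> F i = G i) -> Rprod n F = Rprod n G.
Proof. induction n; intros H; simpl; [reflexivity|]. rewrite IHn, H by auto; reflexivity. Qed.

Lemma Rprod_ge0 n F : (forall i, (i < n)%nat -> 0 <= F i) -> 0 <= Rprod n F.
Proof. induction n; intros H; simpl; [lra|]. apply Rmult_le_pos; [apply IHn|apply H]; auto. Qed.

Lemma Rprod_shift n F : Rprod (S n) F = F O * Rprod n (fun i => F (S i)).
Proof. induction n; simpl in *; [ring|]. rewrite IHn. ring. Qed.

Lemma Rprod_split_at n i0 F : (i0 < n)%nat ->
  Rprod n F = F i0 * Rprod n (fun i => if (i =? i0)%nat then 1 else F i).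
Proof.
  induction n; intros H; simpl; [lia|].
  destruct (Nat.eqb_spec n i0) as [->|Hn].
  - rewrite (Rprod_ext _ _ (fun i => if (i =? i0)%nat then 1 else F i)); [ring|].
    intros i Hi. destruct (Nat.eqb_spec i i0); [lia|reflexivity].
  - rewrite IHn by lia. ring.
Qed.

(** * Complex numbers *)

Lemma Cpx_eq (z w : Cpx) : fst z = fst w -> snd z = snd w -> z = w.
Proof. destruct z, w; simpl; intros -> ->; reflexivity. Qed.

Definition Csub (z w : Cpx) : Cpx := (fst z - fst w, snd z - snd w).

Ltac cpx_ring := apply Cpx_eq; unfold Csub, Cadd, Cmul, Cconj, RtoC, C0, C1; simpl; ring.

Lemma Csub_eq0 z w : Csub z w = C0 -> z = w.
Proof.
  destruct z as [a b], w as [c e]; unfold Csub, C0; simpl. intros E.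
  injection E as E1 E2. f_equal; lra.
Qed.

Lemma Cmul_eq0_r z w : z <> C0 -> Cmul z w = C0 -> w = C0.
Proof.
  destruct z as [a b], w as [c e]; unfold Cmul, C0; simpl. intros Hz E.
  injection E as E1 E2.
  assert (Hn : 0 < a * a + b * b).
  { destruct (Req_dec a 0) as [->|Ha]; [destruct (Req_dec b 0) as [->|Hb]|].
    - contradiction.
    - pose proof (Rsqr_pos_lt b Hb); unfold Rsqr in *; nra.
    - pose proof (Rsqr_pos_lt a Ha); unfold Rsqr in *; nra. }
  assert (Hc : (a * a + b * b) * c = 0).
  { replace ((a * a + b * b) * c) with (a * (a * c - b * e) + b * (a * e + b * c)) by ring.
    rewrite E1, E2; ring. }
  assert (He : (a * a + b * b) * e = 0).
  { replace ((a * a + b * b) * e) with (a * (a * e + b * c) - b * (a * c - b * e)) by ring.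
    rewrite E1, E2; ring. }
  apply Rmult_integral in Hc, He. f_equal; lra.
Qed.

Lemma Csum_ext n F G : (forall i, (i < n)%nat -> F i = G i) -> Csum n F = Csum n G.
Proof. induction n; intros H; simpl; [reflexivity|]. rewrite IHn, H by auto; reflexivity. Qed.

Lemma Csum_add n F G : Csum n (fun i => Cadd (F i) (G i)) = Cadd (Csum n F) (Csum n G).
Proof. induction n; simpl; [cpx_ring|]. rewrite IHn; cpx_ring. Qed.

Lemma Csum_sub n F G : Csum n (fun i => Csub (F i) (G i)) = Csub (Csum n F) (Csum n G).
Proof. induction n; simpl; [cpx_ring|]. rewrite IHn; cpx_ring. Qed.

Lemma Csum_scal_l n c F : Csum n (fun i => Cmul c (F i)) = Cmul c (Csum n F).
Proof. induction n; simpl; [cpx_ring|]. rewrite IHn; cpx_ring. Qed.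

Lemma Csum_scal_r n c F : Csum n (fun i => Cmul (F i) c) = Cmul (Csum n F) c.
Proof. induction n; simpl; [cpx_ring|]. rewrite IHn; cpx_ring. Qed.

Lemma Csum_eq0 n F : (forall i, (i < n)%nat -> F i = C0) -> Csum n F = C0.
Proof. induction n; intros H; simpl; [reflexivity|]. rewrite IHn, H by auto; cpx_ring. Qed.

Lemma Csum_succ n F : Csum (S n) F = Cadd (Csum n F) (F n).
Proof. reflexivity. Qed.

Lemma Csum_shift n F : Csum (S n) F = Cadd (F O) (Csum n (fun i => F (S i))).
Proof. induction n; simpl in *; [cpx_ring|]. rewrite IHn; cpx_ring. Qed.

Lemma Csum_swap n m F :
  Csum n (fun i => Csum m (fun j => F i j)) = Csum m (fun j => Csum n (fun i => F i j)).
Proof.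
  induction n; simpl.
  - symmetry; apply Csum_eq0; auto.
  - rewrite IHn, <- Csum_add. reflexivity.
Qed.

Lemma Csum_delta n j c : (j < n)%nat -> Csum n (fun i => if (i =? j)%nat then c else C0) = c.
Proof.
  induction n; intros H; simpl; [lia|].
  destruct (Nat.eqb_spec n j) as [->|Hnj].
  - rewrite Csum_eq0; [cpx_ring|]. intros i Hi. destruct (Nat.eqb_spec i j); [lia|auto].
  - rewrite IHn by lia. cpx_ring.
Qed.

Lemma Csum_telescope n F : Csum n (fun k => Csub (F (S k)) (F k)) = Csub (F n) (F O).
Proof. induction n; simpl; [cpx_ring|]. rewrite IHn; cpx_ring. Qed.

Lemma Csum_C1 n : Csum n (fun _ => C1) = RtoC (INR n).
Proof. induction n; simpl Csum; [cpx_ring|]. rewrite IHn, S_INR. cpx_ring. Qed.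

Definition cis (x : R) : Cpx := (cos x, sin x).

Lemma cis_add x y : Cmul (cis x) (cis y) = cis (x + y).
Proof. unfold cis, Cmul; simpl. rewrite cos_plus, sin_plus. f_equal; ring. Qed.

Lemma Cconj_cis x : Cconj (cis x) = cis (- x).
Proof. unfold cis, Cconj; simpl. rewrite cos_neg, sin_neg. reflexivity. Qed.

Lemma cis_0 : cis 0 = C1.
Proof. unfold cis. rewrite cos_0, sin_0. reflexivity. Qed.

Lemma cis_period x k : cis (x + 2 * INR k * PI) = cis x.
Proof. unfold cis. rewrite cos_period, sin_period. reflexivity. Qed.

Lemma cis_neq_C1 x : 0 < Rabs x < 2 * PI -> cis x <> C1.
Proof.
  intros Hx E. injection E as Hc Hs.
  assert (Hc' : cos (Rabs x) = 1) by (unfold Rabs; destruct (Rcase_abs x); rewrite ?cos_neg; auto).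
  assert (Hs' : sin (Rabs x) = 0) by (unfold Rabs; destruct (Rcase_abs x); rewrite ?sin_neg; lra).
  destruct (Rtotal_order (Rabs x) PI) as [H|[H|H]].
  - pose proof (sin_gt_0 (Rabs x) ltac:(lra) H); lra.
  - rewrite H, cos_PI in Hc'; lra.
  - pose proof (sin_lt_0 (Rabs x) H ltac:(lra)); lra.
Qed.

(* Multiplied by [cis x - 1] the sum telescopes to [cis (n x) - 1 = 0]. *)
Lemma Csum_cis_multiples n x : cis x <> C1 -> cis (INR n * x) = C1 ->
  Csum n (fun k => cis (INR k * x)) = C0.
Proof.
  intros Hx Hn. apply (Cmul_eq0_r (Csub (cis x) C1)).
  - intros E. apply Hx, Csub_eq0, E.
  - rewrite <- Csum_scal_l.
    rewrite (Csum_ext _ _ (fun k => Csub (cis (INR (S k) * x)) (cis (INR k * x)))).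
    + rewrite (Csum_telescope n (fun k => cis (INR k * x))), Hn.
      simpl INR. rewrite Rmult_0_l, cis_0. cpx_ring.
    + intros k _. rewrite S_INR.
      replace ((INR k + 1) * x) with (x + INR k * x) by ring. rewrite <- cis_add. cpx_ring.
Qed.

(** * The unitary DFT matrix *)

Lemma Cmat_cis P j k :
  Cmat P j k = Cmul (RtoC (/ sqrt (INR P))) (cis (2 * PI * INR j * INR k / INR P)).
Proof. unfold Cmat, cis; apply Cpx_eq; simpl; unfold Rdiv; ring. Qed.

Lemma Cmat_sym P j k : Cmat P j k = Cmat P k j.
Proof. unfold Cmat. replace (2 * PI * INR j * INR k) with (2 * PI * INR k * INR j) by ring. reflexivity. Qed.

Lemma Cmat_period P j k : (0 < P)%nat -> Cmat P (j + P) k = Cmat P j k.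
Proof.
  intros HP. assert (0 < INR P) by (apply lt_0_INR; lia). rewrite !Cmat_cis.
  replace (2 * PI * INR (j + P) * INR k / INR P) with (2 * PI * INR j * INR k / INR P + 2 * INR k * PI)
    by (rewrite plus_INR; field; lra).
  rewrite cis_period. reflexivity.
Qed.

Definition dft_coef (P j : nat) (x : nat -> Cpx) : Cpx :=
  Csum P (fun k => Cmul (x k) (Cconj (Cmat P j k))).

Lemma dft_coef_Cmat P m j : (m < P)%nat -> (j < P)%nat ->
  dft_coef P j (Cmat P m) = if (m =? j)%nat then C1 else C0.
Proof.
  intros Hm Hj. unfold dft_coef. assert (HP : 0 < INR P) by (apply lt_0_INR; lia).
  set (x := 2 * PI / INR P * (INR m - INR j)).
  rewrite (Csum_ext _ _ (fun k => Cmul (RtoC (/ INR P)) (cis (INR k * x)))).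
  2:{ intros k _. rewrite !Cmat_cis.
      transitivity (Cmul (RtoC (/ sqrt (INR P) * / sqrt (INR P)))
                      (Cmul (cis (2 * PI * INR m * INR k / INR P))
                            (Cconj (cis (2 * PI * INR j * INR k / INR P)))));
        [cpx_ring|].
      rewrite Cconj_cis, cis_add, <- Rinv_mult, sqrt_sqrt by lra.
      f_equal. f_equal. unfold x. field. lra. }
  rewrite Csum_scal_l. destruct (Nat.eqb_spec m j) as [->|Hmj].
  - replace x with 0 by (unfold x; ring).
    rewrite (Csum_ext _ _ (fun _ => C1)), Csum_C1 by (intros; rewrite Rmult_0_r, cis_0; reflexivity).
    unfold Cmul, RtoC, C1; simpl. f_equal; field; lra.
  - rewrite Csum_cis_multiples; [cpx_ring| |].
    + apply cis_neq_C1.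
      assert (INR m <> INR j) by (intros E; apply INR_eq in E; contradiction).
      assert (INR m < INR P /\ INR j < INR P) as [] by (split; apply lt_INR; assumption).
      pose proof (pos_INR m); pose proof (pos_INR j); pose proof PI_RGT_0.
      assert (Hd : 0 < Rabs (INR m - INR j) < INR P) by (unfold Rabs; destruct (Rcase_abs _); lra).
      unfold x. rewrite Rabs_mult, (Rabs_pos_eq (2 * PI / INR P)).
      * split; [apply Rmult_lt_0_compat; [apply Rdiv_lt_0_compat|]; lra|].
        apply Rlt_le_trans with (2 * PI / INR P * INR P); [apply Rmult_lt_compat_l|right; field];
          try apply Rdiv_lt_0_compat; lra.
      * apply Rlt_le, Rdiv_lt_0_compat; lra.
    + replace (INR P * x) with (0 + 2 * INR m * PI - 2 * INR j * PI) by (unfold x; field; lra).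
      rewrite <- (cis_period _ j). replace (0 + 2 * INR m * PI - 2 * INR j * PI + 2 * INR j * PI)
        with (0 + 2 * INR m * PI) by ring.
      rewrite cis_period, cis_0. reflexivity.
Qed.

Lemma dft_coef_ext P j x y : (forall k, (k < P)%nat -> x k = y k) -> dft_coef P j x = dft_coef P j y.
Proof. intros H. unfold dft_coef. apply Csum_ext. intros k Hk. rewrite H by assumption. reflexivity. Qed.

Lemma dft_coef_add P j x y :
  dft_coef P j (fun k => Cadd (x k) (y k)) = Cadd (dft_coef P j x) (dft_coef P j y).
Proof.
  unfold dft_coef. rewrite <- Csum_add. apply Csum_ext. intros; cpx_ring.
Qed.

Lemma dft_coef_scal P j c x : dft_coef P j (fun k => Cmul c (x k)) = Cmul c (dft_coef P j x).
Proof.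
  unfold dft_coef. rewrite <- Csum_scal_l. apply Csum_ext. intros; cpx_ring.
Qed.

Lemma dft_coef_sum P j n x :
  dft_coef P j (fun k => Csum n (fun i => x i k)) = Csum n (fun i => dft_coef P j (x i)).
Proof.
  unfold dft_coef. rewrite <- Csum_swap. apply Csum_ext. intros. rewrite Csum_scal_r. reflexivity.
Qed.

Lemma dft_coef_period P j x : (0 < P)%nat -> dft_coef P (j + P) x = dft_coef P j x.
Proof.
  intros HP. unfold dft_coef. apply Csum_ext. intros. rewrite Cmat_period by assumption. reflexivity.
Qed.

Lemma dft_inversion P x j : (j < P)%nat -> Csum P (fun k => Cmul (Cmat P j k) (dft_coef P k x)) = x j.
Proof.
  intros Hj. unfold dft_coef.
  rewrite (Csum_ext _ _ (fun k => Csum P (fun l => Cmul (x l) (Cmul (Cmat P j k) (Cconj (Cmat P l k)))))).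
  2:{ intros k _. rewrite <- Csum_scal_l. apply Csum_ext. intros l _. rewrite (Cmat_sym P k l). cpx_ring. }
  rewrite Csum_swap.
  rewrite (Csum_ext _ _ (fun l => if (l =? j)%nat then x j else C0)).
  - apply Csum_delta, Hj.
  - intros l Hl. rewrite Csum_scal_l.
    change (Csum P (fun k => Cmul (Cmat P j k) (Cconj (Cmat P l k)))) with (dft_coef P l (Cmat P j)).
    rewrite dft_coef_Cmat by assumption.
    destruct (Nat.eqb_spec j l), (Nat.eqb_spec l j); subst; try lia; cpx_ring.
Qed.

Definition twiddle (P k : nat) : Cpx := cis (- (2 * PI * INR k / INR P)).

Lemma Cconj_Cmat_succ P a k : (0 < P)%nat ->
  Cconj (Cmat P (S a) k) = Cmul (twiddle P k) (Cconj (Cmat P a k)).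
Proof.
  intros HP. assert (0 < INR P) by (apply lt_0_INR; lia).
  rewrite !Cmat_cis. unfold twiddle.
  transitivity (Cmul (RtoC (/ sqrt (INR P))) (Cconj (cis (2 * PI * INR (S a) * INR k / INR P))));
    [cpx_ring|].
  transitivity (Cmul (RtoC (/ sqrt (INR P)))
    (Cmul (cis (- (2 * PI * INR k / INR P))) (Cconj (cis (2 * PI * INR a * INR k / INR P))))); [|cpx_ring].
  rewrite !Cconj_cis, cis_add, S_INR. do 3 f_equal. field. lra.
Qed.

(** * Linear recurrences *)

(* [shift_poly r x] is [prod_(c in r) (E - c)] applied to [x], where [E x a = x (S a)];
   [shift_poly_coef r] lists the coefficients of [prod_(c in r) (X - c)]. *)
Fixpoint shift_poly (r : list Cpx) (x : nat -> Cpx) : nat -> Cpx :=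
  match r with
  | nil => x
  | c :: r' => fun a => Csub (shift_poly r' x (S a)) (Cmul c (shift_poly r' x a))
  end.

Fixpoint shift_poly_coef (r : list Cpx) (u : nat) : Cpx :=
  match r with
  | nil => if (u =? 0)%nat then C1 else C0
  | c :: r' =>
      Csub (match u with O => C0 | S u' => shift_poly_coef r' u' end) (Cmul c (shift_poly_coef r' u))
  end.

Lemma shift_poly_coef_high r u : (length r < u)%nat -> shift_poly_coef r u = C0.
Proof.
  revert u; induction r; intros [|u] H; simpl in *; try lia; [reflexivity|].
  rewrite !IHr by lia. cpx_ring.
Qed.

Lemma shift_poly_coef_lead r : shift_poly_coef r (length r) = C1.
Proof. induction r; simpl; [reflexivity|]. rewrite IHr, shift_poly_coef_high by lia. cpx_ring. Qed.

Lemma shift_poly_expand r x a :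
  shift_poly r x a = Csum (S (length r)) (fun u => Cmul (shift_poly_coef r u) (x (a + u)%nat)).
Proof.
  revert a; induction r as [|c r IH]; intros a; simpl shift_poly.
  - simpl. rewrite Nat.add_0_r. cpx_ring.
  - rewrite !IH. simpl length. simpl shift_poly_coef.
    rewrite Csum_ext with (n := S (S (length r))) (G := fun u =>
      Csub (Cmul (match u with O => C0 | S u' => shift_poly_coef r u' end) (x (a + u)%nat))
           (Cmul c (Cmul (shift_poly_coef r u) (x (a + u)%nat)))) by (intros [|u] _; cpx_ring).
    rewrite Csum_sub, Csum_scal_l, (Csum_shift (S (length r))).
    rewrite Csum_ext with (F := fun u => Cmul (shift_poly_coef r u) (x (S a + u)%nat))
      (G := fun u => Cmul (shift_poly_coef r u) (x (a + S u)%nat))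
      by (intros; rewrite Nat.add_succ_r; reflexivity).
    rewrite (Csum_succ (S (length r))), (shift_poly_coef_high r (S (length r))) by lia. cpx_ring.
Qed.

Lemma shift_poly_monic r x a :
  shift_poly r x a = Cadd (x (a + length r)%nat)
    (Csum (length r) (fun u => Cmul (shift_poly_coef r u) (x (a + u)%nat))).
Proof. rewrite shift_poly_expand. simpl Csum. rewrite shift_poly_coef_lead. cpx_ring. Qed.

Lemma shift_poly_shift r x u a : shift_poly r (fun b => x (b + u)%nat) a = shift_poly r x (a + u)%nat.
Proof. revert a; induction r; intros b; simpl; [reflexivity|]. rewrite !IHr. reflexivity. Qed.

Lemma shift_poly_sub r x y a :
  shift_poly r (fun b => Csub (x b) (y b)) a = Csub (shift_poly r x a) (shift_poly r y a).
Proof. revert a; induction r; intros b; simpl; [reflexivity|]. rewrite !IHr. cpx_ring. Qed.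

Lemma shift_poly_scal r c x a : shift_poly r (fun b => Cmul c (x b)) a = Cmul c (shift_poly r x a).
Proof. revert a; induction r; intros b; simpl; [reflexivity|]. rewrite !IHr. cpx_ring. Qed.

Lemma shift_poly_sum r n y a :
  shift_poly r (fun b => Csum n (fun k => y k b)) a = Csum n (fun k => shift_poly r (y k) a).
Proof.
  revert a; induction r; intros b; simpl; [reflexivity|].
  rewrite !IHr, <- Csum_scal_l, <- Csum_sub. reflexivity.
Qed.

Lemma shift_poly_geometric r x z : (forall a, x (S a) = Cmul z (x a)) ->
  forall a, shift_poly r x (S a) = Cmul z (shift_poly r x a).
Proof. intros H; induction r; intros b; simpl; [auto|]. rewrite !IHr. cpx_ring. Qed.

Lemma shift_poly_root r x z : (forall a, x (S a) = Cmul z (x a)) -> In z r ->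
  forall a, shift_poly r x a = C0.
Proof.
  intros H; induction r as [|c r IH]; simpl; intros Hin a; [tauto|].
  destruct Hin as [<-|Hin].
  - rewrite (shift_poly_geometric r x c H). cpx_ring.
  - rewrite !IH by assumption. cpx_ring.
Qed.

Lemma shift_poly_kernel_zero r x a0 : (forall a, shift_poly r x a = C0) ->
  (forall a, (a0 <= a < a0 + length r)%nat -> x a = C0) ->
  forall a, (a0 <= a)%nat -> x a = C0.
Proof.
  intros Hker Hinit a. induction a as [a IH] using (well_founded_induction Wf_nat.lt_wf). intros Ha.
  destruct (Nat.lt_ge_cases a (a0 + length r)) as [Hlt|Hge]; [apply Hinit; lia|].
  specialize (Hker (a - length r)%nat). rewrite shift_poly_monic, Csum_eq0 in Hker.
  - replace (a - length r + length r)%nat with a in Hker by lia. rewrite <- Hker. cpx_ring.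
  - intros u Hu. rewrite IH by lia. cpx_ring.
Qed.

(** * Recovery of the noise *)

Lemma RtoC_Rsum n F : RtoC (Rsum n F) = Csum n (fun i => RtoC (F i)).
Proof. induction n; [reflexivity|]. rewrite Csum_succ, <- IHn. cpx_ring. Qed.

Section Recovery.

Variables (s P d : nat) (Q : nat -> nat -> Cpx) (G N : nat -> nat -> R) (f : nat -> R).
Hypothesis HP : (2 * s + 1 <= P)%nat.

Definition noise (k : nat) : R := Rsum d (fun i => f i * N i k).

Definition spectrum (a : nat) : Cpx := dft_coef P a (fun k => RtoC (noise k)).

Lemma dft_coef_Wmat k j : (P - 2 * s <= j < P)%nat -> dft_coef P j (Wmat s P Q k) = C0.
Proof.
  intros Hj. unfold Wmat. rewrite dft_coef_add, dft_coef_sum, dft_coef_Cmat by lia.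
  rewrite Csum_eq0.
  - destruct (Nat.eqb_spec (P - 2 * s - 1) j); [lia|]. cpx_ring.
  - intros m Hm. rewrite dft_coef_scal, dft_coef_Cmat by lia.
    destruct (Nat.eqb_spec m j); [lia|]. cpx_ring.
Qed.

Lemma h_init_spectrum j : (P - 2 * s <= j < P)%nat -> h_init s P d (GWN s P Q G N) f j = spectrum j.
Proof.
  intros Hj. unfold h_init. replace (P - 2 * s <=? j)%nat with true by (symmetry; apply Nat.leb_le; lia).
  change (Csum d (fun i => Cmul (RtoC (f i)) (dft_coef P j (GWN s P Q G N i))) = spectrum j).
  unfold GWN.
  rewrite (Csum_ext _ _ (fun i => dft_coef P j (fun k => Cmul (RtoC (f i)) (RtoC (N i k))))).
  - unfold spectrum, noise. rewrite <- dft_coef_sum. apply dft_coef_ext. intros k _.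
    rewrite RtoC_Rsum. apply Csum_ext. intros; cpx_ring.
  - intros i _. rewrite dft_coef_scal, dft_coef_add, dft_coef_sum, Csum_eq0; [cpx_ring|].
    intros k _. rewrite dft_coef_scal, dft_coef_Wmat by assumption. cpx_ring.
Qed.

Lemma spectrum_period a : spectrum (a + P) = spectrum a.
Proof. apply dft_coef_period. lia. Qed.

Lemma spectrum_mod a : spectrum (a mod P) = spectrum a.
Proof.
  rewrite (Nat.div_mod_eq a P) at 2. induction (a / P)%nat as [|q IH].
  - f_equal. lia.
  - rewrite IH. replace (P * S q + a mod P)%nat with (P * q + a mod P + P)%nat by lia.
    symmetry; apply spectrum_period.
Qed.

Lemma col_nonzero_of_noise k : noise k <> 0 -> col_nonzero d N k.
Proof.
  intros Hk. apply Classical_Prop.NNPP. intros Hcol. apply Hk. apply Rsum_eq0. intros i Hi.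
  destruct (Req_dec (N i k) 0) as [->|Hik]; [ring|]. exfalso. apply Hcol. exists i. auto.
Qed.

Variable l : list nat.
Hypothesis Hl : (length l <= s)%nat.
Hypothesis Hsupp : forall j, (j < P)%nat -> col_nonzero d N j -> In j l.

(* Padding with the root [0], whose factor [E] is a mere shift, makes the order exactly [s]. *)
Definition roots : list Cpx := map (twiddle P) l ++ repeat C0 (s - length l).

Lemma roots_length : length roots = s.
Proof. unfold roots. rewrite length_app, length_map, repeat_length, Nat.add_comm. apply Nat.sub_add, Hl. Qed.

Lemma spectrum_annihilated a : shift_poly roots spectrum a = C0.
Proof.
  unfold spectrum, dft_coef. rewrite shift_poly_sum. apply Csum_eq0. intros k Hk.
  rewrite shift_poly_scal. destruct (Req_dec (noise k) 0) as [->|Hnz]; [cpx_ring|].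
  rewrite (shift_poly_root roots _ (twiddle P k)); [cpx_ring| |].
  - intros b. apply Cconj_Cmat_succ. lia.
  - apply in_or_app. left. apply in_map, Hsupp, col_nonzero_of_noise; assumption.
Qed.

Definition prony_coef (u : nat) : Cpx := Csub C0 (shift_poly_coef roots u).

Lemma spectrum_recurrence a :
  spectrum (a + s)%nat = Csum s (fun u => Cmul (prony_coef u) (spectrum (a + u)%nat)).
Proof.
  pose proof (spectrum_annihilated a) as E. rewrite shift_poly_monic, roots_length in E.
  unfold prony_coef.
  rewrite (Csum_ext _ _ (fun u => Cmul (Csub C0 C1) (Cmul (shift_poly_coef roots u) (spectrum (a + u)%nat))))
    by (intros; cpx_ring).
  rewrite Csum_scal_l. apply Csub_eq0.
  transitivity (Cadd (spectrum (a + s)%nat)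
                     (Csum s (fun u => Cmul (shift_poly_coef roots u) (spectrum (a + u)%nat))));
    [cpx_ring|exact E].
Qed.

Lemma prony_coef_solves : beta_solves s P (h_init s P d (GWN s P Q G N) f) prony_coef.
Proof.
  intros i Hi. rewrite h_init_spectrum by lia.
  rewrite (Csum_ext _ _ (fun u => Cmul (prony_coef u) (spectrum (P - s - i + u)%nat))).
  - rewrite <- spectrum_recurrence. f_equal. lia.
  - intros u Hu. rewrite h_init_spectrum by lia. reflexivity.
Qed.

Section AnySolution.

Variable beta : nat -> Cpx.
Hypothesis Hbeta : beta_solves s P (h_init s P d (GWN s P Q G N) f) beta.

(* The residual is annihilated like [spectrum], and the [s] equations solved by [beta] say that
   it vanishes on [s] consecutive indices; hence it vanishes from there on, and by periodicity
   everywhere. *)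
Lemma beta_recurrence a :
  spectrum (a + s)%nat = Csum s (fun u => Cmul (beta u) (spectrum (a + u)%nat)).
Proof.
  set (residual := fun b => Csub (Csum s (fun u => Cmul (beta u) (spectrum (b + u)%nat)))
                                 (spectrum (b + s)%nat)).
  assert (Hker : forall b, shift_poly roots residual b = C0).
  { intros b. unfold residual. rewrite shift_poly_sub, shift_poly_sum, shift_poly_shift.
    rewrite Csum_eq0; [rewrite spectrum_annihilated; cpx_ring|].
    intros u _. rewrite shift_poly_scal, shift_poly_shift, spectrum_annihilated. cpx_ring. }
  assert (Hinit : forall b, (P - 2 * s <= b < P - 2 * s + length roots)%nat -> residual b = C0).
  { intros b Hb. rewrite roots_length in Hb. pose proof (Hbeta (P - s - b)%nat ltac:(lia)) as E.
    rewrite h_init_spectrum in E by lia.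
    replace (P - (P - s - b))%nat with (b + s)%nat in E by lia.
    rewrite (Csum_ext _ _ (fun u => Cmul (beta u) (spectrum (b + u)%nat))) in E.
    - unfold residual. rewrite E. cpx_ring.
    - intros u Hu. rewrite h_init_spectrum by lia. do 2 f_equal. lia. }
  pose proof (shift_poly_kernel_zero _ _ _ Hker Hinit (a + P) ltac:(lia)) as E.
  unfold residual in E. replace (a + P + s)%nat with (a + s + P)%nat in E by lia.
  rewrite spectrum_period in E.
  rewrite (Csum_ext _ _ (fun u => Cmul (beta u) (spectrum (a + u)%nat))) in E.
  - symmetry. apply Csub_eq0, E.
  - intros u _. replace (a + P + u)%nat with (a + u + P)%nat by lia. rewrite spectrum_period. reflexivity.
Qed.

Lemma h_rec_spectrum m : (m <= P - 2 * s)%nat -> forall k, (k < P)%nat -> (k < m \/ P - 2 * s <= k)%nat ->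
  h_rec s P beta (h_init s P d (GWN s P Q G N) f) m k = spectrum k.
Proof.
  induction m as [|m IH]; intros Hm k Hk Hkm; simpl h_rec; [apply h_init_spectrum; lia|].
  destruct (Nat.eqb_spec k m) as [->|]; [|apply IH; lia].
  rewrite (Csum_ext _ _ (fun u => Cmul (beta u) (spectrum (m + P - s + u)%nat))).
  - rewrite <- beta_recurrence. replace (m + P - s + s)%nat with (m + P)%nat by lia.
    apply spectrum_period.
  - intros u Hu. rewrite IH; [rewrite spectrum_mod; do 2 f_equal; lia|lia|apply Nat.mod_upper_bound; lia|].
    destruct (Nat.lt_ge_cases (m + u) s).
    + rewrite Nat.mod_small by lia. lia.
    + replace (m + u + P - s)%nat with ((m + u - s) + 1 * P)%nat by lia.
      rewrite Nat.Div0.mod_add, Nat.mod_small by lia. lia.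
Qed.

Lemma t_vec_noise j : (j < P)%nat -> t_vec s P d (GWN s P Q G N) f beta j = RtoC (noise j).
Proof.
  intros Hj. unfold t_vec, h_full. rewrite <- (dft_inversion P (fun k => RtoC (noise k))) by assumption.
  apply Csum_ext. intros k Hk. rewrite h_rec_spectrum by lia. reflexivity.
Qed.

End AnySolution.

Lemma phi_correct : (forall j, (j < P)%nat -> col_nonzero d N j -> noise j <> 0) ->
  ~ phi_fails s P d (GWN s P Q G N) (col_nonzero d N) f.
Proof.
  intros Hgen [Hnone|[beta [Hb Hwrong]]].
  - apply Hnone. exists prony_coef. apply prony_coef_solves.
  - apply Hwrong. intros j Hj. rewrite t_vec_noise by assumption. split.
    + intros Hz. apply col_nonzero_of_noise. intros E. apply Hz. rewrite E. reflexivity.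
    + intros Hc E. apply (Hgen j Hj Hc). apply (f_equal fst) in E. exact E.
Qed.

End Recovery.

(** * Null sets *)

Lemma null_mono d (E F : (nat -> R) -> Prop) :
  (forall f, E f -> F f) -> lebesgue_null d F -> lebesgue_null d E.
Proof.
  intros H HF eps Heps. destruct (HF eps Heps) as [a [b [Hab [Hvol Hcov]]]].
  exists a, b. auto.
Qed.

(* Beyond the [K] given boxes we pad with the degenerate box at the origin, of volume [0]
   because [d] is positive. *)
Lemma null_of_finite_covers d (E : (nat -> R) -> Prop) : (1 <= d)%nat ->
  (forall eps, 0 < eps -> exists K (a b : nat -> nat -> R),
     (forall n i, (i < d)%nat -> a n i <= b n i) /\
     Rsum K (fun n => Rprod d (fun i => b n i - a n i)) <= eps /\
     (forall f, E f -> exists n, (n < K)%nat /\ forall i, (i < d)%nat -> a n i <= f i <= b n i)) ->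
  lebesgue_null d E.
Proof.
  intros Hd HE eps Heps. destruct (HE eps Heps) as [K [a [b [Hab [Hvol Hcov]]]]].
  exists (fun n i => if (n <? K)%nat then a n i else 0), (fun n i => if (n <? K)%nat then b n i else 0).
  split; [|split].
  - intros n i Hi. destruct (n <? K)%nat; [auto|lra].
  - intros M. eapply Rle_trans; [apply Rsum_le_range with (K := K)|].
    + intros n. apply Rprod_ge0. intros i Hi. destruct (n <? K)%nat; [pose proof (Hab n i Hi); lra|lra].
    + intros n Hn. replace (n <? K)%nat with false by (symmetry; apply Nat.ltb_ge, Hn).
      destruct d as [|d']; [lia|]. simpl. ring.
    + rewrite (Rsum_ext _ _ (fun n => Rprod d (fun i => b n i - a n i))); [exact Hvol|].
      intros n Hn. replace (n <? K)%nat with true by (symmetry; apply Nat.ltb_lt, Hn). reflexivity.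
  - intros f Hf. destruct (Hcov f Hf) as [n [Hn Hbox]]. exists n.
    replace (n <? K)%nat with true by (symmetry; apply Nat.ltb_lt, Hn). exact Hbox.
Qed.

Lemma null_empty d (E : (nat -> R) -> Prop) : (1 <= d)%nat -> (forall f, ~ E f) -> lebesgue_null d E.
Proof.
  intros Hd HE. apply null_of_finite_covers; [assumption|]. intros eps Heps.
  exists O, (fun _ _ => 0), (fun _ _ => 0). split; [|split].
  - intros; lra.
  - simpl. lra.
  - intros f Hf. exfalso. exact (HE f Hf).
Qed.

Lemma cantor_of_nat_le n : (fst (Cantor.of_nat n) <= n /\ snd (Cantor.of_nat n) <= n)%nat.
Proof.
  pose proof (Cantor.to_nat_non_decreasing (fst (Cantor.of_nat n)) (snd (Cantor.of_nat n))) as H.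
  rewrite <- surjective_pairing, Cantor.cancel_to_of in H. lia.
Qed.

Lemma Rsum_cantor_le M (V : nat -> nat -> R) : (forall k j, 0 <= V k j) ->
  Rsum M (fun n => V (fst (Cantor.of_nat n)) (snd (Cantor.of_nat n))) <= Rsum M (fun k => Rsum M (V k)).
Proof.
  intros HV. set (F := fun x => V (x / M)%nat (x mod M)%nat).
  assert (Hblock : forall k j, (j < M)%nat -> F (k * M + j)%nat = V k j).
  { intros k j Hj. unfold F. rewrite Nat.div_add_l, Nat.div_small, Nat.add_0_r by lia.
    rewrite Nat.add_comm, Nat.Div0.mod_add, Nat.mod_small by lia. reflexivity. }
  set (h := fun n => (fst (Cantor.of_nat n) * M + snd (Cantor.of_nat n))%nat).
  rewrite (Rsum_ext _ _ (fun n => F (h n))).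
  2:{ intros n Hn. unfold h. rewrite Hblock; [reflexivity|]. pose proof (cantor_of_nat_le n). lia. }
  rewrite (Rsum_ext _ (fun k => Rsum M (V k)) (fun k => Rsum M (fun j => F (k * M + j)%nat))).
  2:{ intros k _. apply Rsum_ext. intros j Hj. rewrite Hblock by assumption. reflexivity. }
  rewrite <- Rsum_blocks. apply Rsum_inj_le.
  - intros n Hn. unfold h. pose proof (cantor_of_nat_le n). nia.
  - intros n n' Hn Hn' E. pose proof (cantor_of_nat_le n). pose proof (cantor_of_nat_le n').
    apply Cantor.of_nat_inj. unfold h in E.
    assert (E1 : fst (Cantor.of_nat n) = fst (Cantor.of_nat n')).
    { apply (f_equal (fun x => x / M)%nat) in E. rewrite !Nat.div_add_l, !Nat.div_small in E by lia. lia. }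
    rewrite (surjective_pairing (Cantor.of_nat n)), (surjective_pairing (Cantor.of_nat n')).
    f_equal; lia.
  - intros x. apply HV.
Qed.

Lemma null_countable_union d (E : nat -> (nat -> R) -> Prop) :
  (forall k, lebesgue_null d (E k)) -> lebesgue_null d (fun f => exists k, E k f).
Proof.
  intros HE eps Heps.
  assert (Hk : forall k, 0 < eps / 2 ^ S k) by (intros; apply Rdiv_lt_0_compat; [|apply pow_lt]; lra).
  destruct (IndefiniteDescription.functional_choice
    (fun k (ab : (nat -> nat -> R) * (nat -> nat -> R)) =>
       (forall n i, (i < d)%nat -> fst ab n i <= snd ab n i) /\
       (forall M, Rsum M (fun n => Rprod d (fun i => snd ab n i - fst ab n i)) <= eps / 2 ^ S k) /\
       (forall f, E k f -> exists n, forall i, (i < d)%nat -> fst ab n i <= f i <= snd ab n i)))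
    as [cov Hcov].
  { intros k. destruct (HE k _ (Hk k)) as [a [b Hab]]. exists (a, b). exact Hab. }
  set (A := fun k => fst (cov k)). set (B := fun k => snd (cov k)).
  exists (fun n => A (fst (Cantor.of_nat n)) (snd (Cantor.of_nat n))),
         (fun n => B (fst (Cantor.of_nat n)) (snd (Cantor.of_nat n))).
  split; [|split].
  - intros n i Hi. apply Hcov, Hi.
  - intros M. eapply Rle_trans.
    { apply (Rsum_cantor_le M (fun k n => Rprod d (fun i => B k n i - A k n i))).
      intros k n. apply Rprod_ge0. intros i Hi. pose proof (proj1 (Hcov k) n i Hi). unfold A, B. lra. }
    eapply Rle_trans; [apply (Rsum_le _ _ (fun k => eps / 2 ^ S k)); intros k _; apply Hcov|].
    rewrite Rsum_half_powers.
    enough (0 < eps / 2 ^ M) by lra. apply Rdiv_lt_0_compat; [|apply pow_lt]; lra.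
  - intros f [k Hf]. destruct (proj2 (proj2 (Hcov k)) f Hf) as [n Hn].
    exists (Cantor.to_nat (k, n)). rewrite Cantor.cancel_of_to. exact Hn.
Qed.

(** * Hyperplanes are null *)

Fixpoint encode (T d : nat) (t : nat -> nat) : nat :=
  match d with O => O | S d' => (t O + encode T d' (fun i => t (S i)) * T)%nat end.

Fixpoint digit (T i m : nat) : nat :=
  match i with O => (m mod T)%nat | S i' => digit T i' (m / T)%nat end.

Lemma encode_lt T d t : (0 < T)%nat -> (forall i, (i < d)%nat -> (t i < T)%nat) ->
  (encode T d t < T ^ d)%nat.
Proof.
  revert t; induction d as [|d IH]; intros t HT Ht; simpl; [lia|].
  assert (encode T d (fun i => t (S i)) < T ^ d)%nat by (apply IH; auto; intros; apply Ht; lia).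
  assert (t 0 < T)%nat by (apply Ht; lia). nia.
Qed.

Lemma digit_encode T d t i : (0 < T)%nat -> (forall i, (i < d)%nat -> (t i < T)%nat) -> (i < d)%nat ->
  digit T i (encode T d t) = t i.
Proof.
  revert t i; induction d as [|d IH]; intros t i HT Ht Hi; [lia|]. simpl encode.
  destruct i as [|i]; simpl.
  - rewrite Nat.Div0.mod_add, Nat.mod_small by (apply Ht; lia). reflexivity.
  - rewrite Nat.div_add by lia. rewrite Nat.div_small by (apply Ht; lia). simpl.
    apply (IH (fun j => t (S j))); [assumption|intros; apply Ht; lia|lia].
Qed.

Lemma Rsum_Rprod_digits T d (w : nat -> nat -> R) : (0 < T)%nat ->
  Rsum (T ^ d) (fun m => Rprod d (fun i => w i (digit T i m))) = Rprod d (fun i => Rsum T (w i)).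
Proof.
  intros HT. revert w; induction d as [|d IH]; intros w; [simpl; ring|].
  rewrite Nat.pow_succ_r', Nat.mul_comm, Rsum_blocks.
  rewrite (Rsum_ext _ _ (fun k => Rsum T (w O) * Rprod d (fun i => w (S i) (digit T i k)))).
  - rewrite Rsum_scal_l, (IH (fun i => w (S i))), Rprod_shift. reflexivity.
  - intros k Hk. rewrite <- Rsum_scal_r. apply Rsum_ext. intros j Hj.
    rewrite Rprod_shift. simpl digit. rewrite Nat.add_comm, Nat.Div0.mod_add, Nat.mod_small by lia.
    rewrite Nat.div_add, Nat.div_small by lia. reflexivity.
Qed.

Lemma grid_cell_exists L dl T y : 0 < dl -> (0 < T)%nat -> -L <= y <= -L + INR T * dl ->
  exists t, (t < T)%nat /\ -L + INR t * dl <= y <= -L + INR (S t) * dl.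
Proof.
  intros Hdl HT. induction T as [|T IH]; [lia|]. intros Hy.
  destruct (Nat.eq_dec T 0) as [->|HT0].
  - exists O. simpl in *. split; [lia|lra].
  - destruct (Rle_lt_dec y (-L + INR T * dl)).
    + destruct (IH ltac:(lia) ltac:(lra)) as [t [Ht1 Ht2]]. exists t. split; [lia|assumption].
    + exists T. split; [lia|lra].
Qed.

(* Solving the hyperplane equation for coordinate [i0]: moving the other coordinates by at most
   [delta] moves the solution by at most [delta * sum |a i| / |a i0|]. *)
Lemma hyperplane_solve_bound d (a f x : nat -> R) i0 delta : (i0 < d)%nat -> a i0 <> 0 -> 0 <= delta ->
  Rsum d (fun i => f i * a i) = 0 ->
  (forall i, (i < d)%nat -> i <> i0 -> Rabs (f i - x i) <= delta) ->
  Rabs (f i0 + Rsum d (fun i => if (i =? i0)%nat then 0 else a i * x i) / a i0)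
    <= delta * (Rsum d (fun i => Rabs (a i)) / Rabs (a i0)).
Proof.
  intros Hi0 Ha Hdelta Hf Hx. assert (Habs : 0 < Rabs (a i0)) by (apply Rabs_pos_lt, Ha).
  rewrite (Rsum_split_at d i0) in Hf by assumption.
  replace (f i0 + Rsum d (fun i => if (i =? i0)%nat then 0 else a i * x i) / a i0)
    with (- Rsum d (fun i => if (i =? i0)%nat then 0 else a i * (f i - x i)) / a i0).
  2:{ rewrite (Rsum_ext d _ (fun i => (if (i =? i0)%nat then 0 else f i * a i)
                                   + - (if (i =? i0)%nat then 0 else a i * x i))).
      - rewrite Rsum_plus, Rsum_opp.
        replace (Rsum d (fun i => if (i =? i0)%nat then 0 else f i * a i)) with (- (f i0 * a i0)) by lra.
        field. assumption.
      - intros i _. destruct (i =? i0)%nat; ring. }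
  unfold Rdiv. rewrite Rabs_mult, Rabs_Ropp, Rabs_inv, <- Rmult_assoc.
  apply Rmult_le_compat_r; [left; apply Rinv_0_lt_compat, Habs|].
  eapply Rle_trans; [apply Rabs_Rsum|]. rewrite <- Rsum_scal_l. apply Rsum_le. intros i Hi.
  destruct (Nat.eqb_spec i i0).
  - rewrite Rabs_R0. apply Rmult_le_pos; [assumption|apply Rabs_pos].
  - rewrite Rabs_mult, (Rmult_comm delta). apply Rmult_le_compat_l; [apply Rabs_pos|]. auto.
Qed.

Section HyperplaneGrid.

Variables (d : nat) (a : nat -> R) (i0 : nat) (L : R) (T : nat).
Hypothesis Hi0 : (i0 < d)%nat.
Hypothesis Ha : a i0 <> 0.
Hypothesis HL : 0 < L.
Hypothesis HT : (0 < T)%nat.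

Definition grid_width : R := 2 * L / INR T.
Definition grid_slope : R := Rsum d (fun i => Rabs (a i)) / Rabs (a i0).
Definition grid_corner (m i : nat) : R := -L + INR (digit T i m) * grid_width.
Definition grid_center (m : nat) : R :=
  - (Rsum d (fun i => if (i =? i0)%nat then 0 else a i * grid_corner m i) / a i0).

(* Cells of the grid on [-L, L]^d are indexed by [m < T ^ d]; in direction [i0] only the cells
   with digit [0] are used, thickened around the hyperplane, the others being degenerate. *)
Definition grid_radius (m : nat) : R := if (digit T i0 m =? 0)%nat then grid_slope * grid_width else 0.
Definition grid_lo (m i : nat) : R :=
  if (i =? i0)%nat then grid_center m - grid_radius m else grid_corner m i.
Definition grid_hi (m i : nat) : R :=
  if (i =? i0)%nat then grid_center m + grid_radius m else grid_corner m i + grid_width.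

Lemma grid_width_pos : 0 < grid_width.
Proof. unfold grid_width. apply Rdiv_lt_0_compat; [lra|apply lt_0_INR, HT]. Qed.

Lemma grid_slope_nonneg : 0 <= grid_slope.
Proof.
  unfold grid_slope. apply Rmult_le_pos; [apply Rsum_ge0; intros; apply Rabs_pos|].
  left. apply Rinv_0_lt_compat, Rabs_pos_lt, Ha.
Qed.

Lemma grid_lo_le_hi m i : grid_lo m i <= grid_hi m i.
Proof.
  pose proof grid_width_pos. pose proof grid_slope_nonneg. unfold grid_lo, grid_hi, grid_radius.
  destruct (i =? i0)%nat; [destruct (digit T i0 m =? 0)%nat; nra|lra].
Qed.

Lemma grid_volume :
  Rsum (T ^ d) (fun m => Rprod d (fun i => grid_hi m i - grid_lo m i))
  = 2 * grid_slope * grid_width * Rprod d (fun i => if (i =? i0)%nat then 1 else 2 * L).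
Proof.
  set (w := fun i t =>
    if (i =? i0)%nat then (if (t =? 0)%nat then 2 * grid_slope * grid_width else 0) else grid_width).
  rewrite (Rsum_ext _ _ (fun m => Rprod d (fun i => w i (digit T i m)))).
  2:{ intros m _. apply Rprod_ext. intros i _. unfold grid_hi, grid_lo, grid_radius, w.
      destruct (Nat.eqb_spec i i0) as [->|]; [destruct (digit T i0 m =? 0)%nat|]; ring. }
  rewrite Rsum_Rprod_digits by exact HT.
  rewrite (Rprod_ext _ _ (fun i => if (i =? i0)%nat then 2 * grid_slope * grid_width else 2 * L)).
  - rewrite (Rprod_split_at d i0) by exact Hi0. rewrite Nat.eqb_refl. f_equal.
    apply Rprod_ext. intros i _. destruct (i =? i0)%nat; reflexivity.
  - intros i _. unfold w. destruct (i =? i0)%nat.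
    + apply Rsum_delta, HT.
    + rewrite Rsum_const. unfold grid_width. field. apply not_0_INR. lia.
Qed.

Lemma grid_covers f : Rsum d (fun i => f i * a i) = 0 -> (forall i, (i < d)%nat -> -L <= f i <= L) ->
  exists m, (m < T ^ d)%nat /\ forall i, (i < d)%nat -> grid_lo m i <= f i <= grid_hi m i.
Proof.
  intros Hf Hbox. pose proof grid_width_pos as Hw.
  destruct (IndefiniteDescription.functional_choice (fun i t => (i < d)%nat -> (i <> i0)%nat ->
      (t < T)%nat /\ -L + INR t * grid_width <= f i <= -L + INR (S t) * grid_width)) as [cell Hcell].
  { intros i. destruct (Nat.lt_ge_cases i d) as [Hi|Hi]; [|exists O; intros; lia].
    destruct (grid_cell_exists L grid_width T (f i) Hw HT) as [t Ht].
    - replace (INR T * grid_width) with (2 * L) by (unfold grid_width; field; apply not_0_INR; lia).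
      specialize (Hbox i Hi). lra.
    - exists t. auto. }
  set (t := fun i => if (i =? i0)%nat then O else cell i).
  assert (Ht : forall i, (i < d)%nat -> (t i < T)%nat).
  { intros i Hi. unfold t. destruct (Nat.eqb_spec i i0); [exact HT|apply Hcell; assumption]. }
  set (m := encode T d t). exists m. split; [apply encode_lt; assumption|].
  assert (Hcorner : forall i, (i < d)%nat -> i <> i0 ->
                    grid_corner m i <= f i <= grid_corner m i + grid_width).
  { intros i Hi Hne. unfold grid_corner, m. rewrite digit_encode by assumption. unfold t.
    destruct (Nat.eqb_spec i i0); [contradiction|]. pose proof (Hcell i Hi Hne) as [_ Hc].
    rewrite S_INR in Hc. lra. }
  intros i Hi. unfold grid_lo, grid_hi. destruct (Nat.eqb_spec i i0) as [->|Hne]; [|auto].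
  unfold grid_radius.
  replace (digit T i0 m) with O
    by (unfold m; rewrite digit_encode by assumption; unfold t; rewrite Nat.eqb_refl; reflexivity).
  simpl.
  assert (Hb : Rabs (f i0 + Rsum d (fun i => if (i =? i0)%nat then 0 else a i * grid_corner m i) / a i0)
               <= grid_width * grid_slope).
  { apply hyperplane_solve_bound; [assumption|assumption|lra|assumption|].
    intros j Hj Hne. specialize (Hcorner j Hj Hne). apply Rabs_le. lra. }
  unfold grid_center. revert Hb. unfold Rabs. destruct (Rcase_abs _); intros; lra.
Qed.

End HyperplaneGrid.

Lemma null_hyperplane_in_box d (a : nat -> R) i0 L : (i0 < d)%nat -> a i0 <> 0 -> 0 < L ->
  lebesgue_null d (fun f => Rsum d (fun i => f i * a i) = 0 /\ forall i, (i < d)%nat -> -L <= f i <= L).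
Proof.
  intros Hi0 Ha HL. apply null_of_finite_covers; [lia|]. intros eps Heps.
  set (C := Rprod d (fun i => if (i =? i0)%nat then 1 else 2 * L)).
  assert (HC : 0 <= C) by (apply Rprod_ge0; intros i _; destruct (i =? i0)%nat; lra).
  pose proof (grid_slope_nonneg d a i0 Ha).
  destruct (INR_archimed eps (4 * grid_slope d a i0 * L * C) Heps) as [T HTeps].
  assert (HT : (0 < T)%nat).
  { destruct T; [|lia]. simpl in HTeps.
    assert (0 <= grid_slope d a i0 * L * C) by (apply Rmult_le_pos; [apply Rmult_le_pos|]; lra). lra. }
  assert (HTr : 0 < INR T) by (apply lt_0_INR, HT).
  exists (T ^ d)%nat, (grid_lo d a i0 L T), (grid_hi d a i0 L T). split; [|split].
  - intros n i _. apply grid_lo_le_hi; assumption.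
  - rewrite grid_volume by assumption. fold C. unfold grid_width.
    apply (Rmult_le_reg_r (INR T)); [exact HTr|].
    replace (2 * grid_slope d a i0 * (2 * L / INR T) * C * INR T) with (4 * grid_slope d a i0 * L * C)
      by (field; lra).
    lra.
  - intros f [Hf Hbox]. apply grid_covers; assumption.
Qed.

Lemma null_hyperplane d (a : nat -> R) i0 : (i0 < d)%nat -> a i0 <> 0 ->
  lebesgue_null d (fun f => Rsum d (fun i => f i * a i) = 0).
Proof.
  intros Hi0 Ha.
  apply null_mono with (fun f => exists n, Rsum d (fun i => f i * a i) = 0 /\
                                         forall i, (i < d)%nat -> -INR (S n) <= f i <= INR (S n)).
  - intros f Hf. destruct (INR_archimed 1 (Rsum d (fun i => Rabs (f i))) Rlt_0_1) as [n Hn].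
    exists n. split; [assumption|]. intros i Hi.
    pose proof (Rsum_term_le d (fun i => Rabs (f i)) i (fun j _ => Rabs_pos (f j)) Hi) as Hfi.
    assert (Habs : Rabs (f i) <= INR (S n)) by (rewrite S_INR; lra).
    revert Habs. unfold Rabs. destruct (Rcase_abs (f i)); intros; lra.
  - apply null_countable_union. intros n. apply (null_hyperplane_in_box d a i0); [assumption|assumption|].
    apply lt_0_INR. lia.
Qed.

Theorem lemma4 (s P d : nat) (Hs : (1 <= s)%nat) (HP : (2 * s + 1 <= P)%nat)
  (Hd : (1 <= d)%nat)
  (Q : nat -> nat -> Cpx) (HQ : is_Q s P Q)
  (G N : nat -> nat -> R)
  (HN : exists l : list nat, NoDup l /\ (length l <= s)%nat /\
          forall j, (j < P)%nat -> col_nonzero d N j -> In j l) :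
  lebesgue_null d (phi_fails s P d (GWN s P Q G N) (col_nonzero d N)).
Proof.
  destruct HN as [l [_ [Hl Hsupp]]].
  apply null_mono with (fun f => exists j, col_nonzero d N j /\ Rsum d (fun i => f i * N i j) = 0).
  - intros f Hf. apply Classical_Prop.NNPP. intros Hgen.
    apply (phi_correct s P d Q G N f HP l Hl Hsupp); [|exact Hf].
    intros j _ Hcol Hz. apply Hgen. exists j. split; assumption.
  - apply null_countable_union. intros j.
    destruct (Classical_Prop.classic (col_nonzero d N j)) as [[i0 [Hi0 Hcol]]|Hnone].
    + apply null_mono with (fun f => Rsum d (fun i => f i * N i j) = 0); [tauto|].
      apply (null_hyperplane d (fun i => N i j) i0); assumption.
    + apply null_empty; [assumption|]. intros f [Hcol _]. exact (Hnone Hcol).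
Qed.
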